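(* Let $\mathscr{H}$ be a Hilbert space and let $U \in \mathcal{B}(\mathscr{H})$ be a unitary operator whose spectrum satisfies $\mathrm{sp}(U) \subset C_k$ for some $k \in \{1,2,3,4\}$. Then $U$ cannot be written as the product of three symmetries in $\mathcal{B}(\mathscr{H})$.
   Context: $\mathcal{B}(\mathscr{H})$ is the algebra of bounded operators on $\mathscr{H}$; a symmetry is a self-adjoint unitary. For $1 \le k \le 4$, $C_k := \{\exp(2\pi i\alpha) : \tfrac{k-1}{4} < \alpha < \tfrac{k}{4}\}$, the four connected components of $S^1 \setminus \{1, i, -1, -i\}$. *)

From mathcomp Require Import all_boot all_order all_algebra.
From mathcomp Require Import complex.
From mathcomp Require Import all_classical all_reals.
From mathcomp Require Import trigo.

Set Implicit Arguments.
Unset Strict Implicit.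
Unset Printing Implicit Defensive.

Import Order.TTheory GRing.Theory Num.Theory.
Local Open Scope ring_scope.
Local Open Scope complex_scope.

Section Hilbert.
Variables (R : realType) (H : lmodType R[i]) (inner : H -> H -> R[i]).

Definition hnorm (x : H) : R := Num.sqrt (complex.Re (inner x x)).

Definition is_inner_product : Prop :=
  [/\ forall (a : R[i]) (x y z : H),
        inner (a *: x + y) z = a * inner x z + inner y z,
      forall x y : H, inner y x = (inner x y)^*,
      forall x : H, 0 <= inner x x
    & forall x : H, inner x x = 0 -> x = 0].

Definition hcauchy (u : nat -> H) : Prop :=
  forall e : R, 0 < e -> exists N : nat, forall m n : nat,
    (N <= m)%N -> (N <= n)%N -> hnorm (u m - u n) < e.

Definition hconverges (u : nat -> H) : Prop :=
  exists l : H, forall e : R, 0 < e -> exists N : nat, forall n : nat,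
    (N <= n)%N -> hnorm (u n - l) < e.

Definition is_hilbert : Prop :=
  is_inner_product /\ forall u : nat -> H, hcauchy u -> hconverges u.

Definition bounded_op (T : H -> H) : Prop :=
  (forall (a : R[i]) (x y : H), T (a *: x + y) = a *: T x + T y) /\
  exists M : R, forall x : H, hnorm (T x) <= M * hnorm x.

Definition is_adjoint (T T' : H -> H) : Prop :=
  forall x y : H, inner (T x) y = inner x (T' y).

Definition unitary (T : H -> H) : Prop :=
  bounded_op T /\ exists T' : H -> H,
    [/\ bounded_op T', is_adjoint T T',
        forall x, T' (T x) = x & forall x, T (T' x) = x].

Definition symmetry (S : H -> H) : Prop := unitary S /\ is_adjoint S S.

Definition spectrum (T : H -> H) : set R[i] :=
  [set l | ~ exists V : H -> H,
      [/\ bounded_op V,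
          forall x, V (T x - l *: x) = x
        & forall x, T (V x) - l *: V x = x]].

End Hilbert.

Definition arcC (R : realType) (k : nat) : set R[i] :=
  [set z | exists alpha : R,
      (k%:R - 1) / 4%:R < alpha /\ alpha < k%:R / 4%:R /\
      z = (cos (2%:R * pi * alpha)) +i* (sin (2%:R * pi * alpha))].

(* The numerical range of a unitary W is governed by approximate eigenvalues:
   if m is the infimum of Re <W x, x> / |x|^2, then W + W^* - 2m is a positive
   operator with no positive lower bound, and it factors as
   W^* (W - mu) (W - conj mu) with mu = m + i sqrt (1 - m^2), so mu or conj mu is
   an approximate eigenvalue of W.  Applied to U in two directions, the
   hypothesis sp(U) in C_k keeps the numerical range of U in a closed cone
   strictly inside the open quarter-plane C_k.  Now let U = S1 S2 S3.  Since S2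
   is self-adjoint, <U z, S1 S3 z> = <S2 S3 z, S3 z> is real.  The unitary
   S1 S3 has an approximate eigenvalue mu, and so does conj mu because S1
   conjugates S1 S3 to its inverse.  Along approximate eigenvectors x for
   conj mu and y for mu, both mu <U x, x> and conj mu <U y, y> are almost real,
   hence so is the product <U x, x> <U y, y>; but the product of two points of
   the cone has imaginary part bounded away from 0. *)

From mathcomp Require Import all_boot all_order all_algebra.
From mathcomp Require Import complex.
From mathcomp Require Import all_classical all_reals.
From mathcomp Require Import trigo.
From mathcomp Require Import ring lra.
Import Order.TTheory GRing.Theory Num.Theory.
Set Implicit Arguments.
Unset Strict Implicit.
Unset Printing Implicit Defensive.
Local Open Scope ring_scope.
Local Open Scope classical_set_scope.
Local Open Scope complex_scope.
Local Notation Re := complex.Re.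
Local Notation Im := complex.Im.

Section ComplexParts.
Variable R : realType.
Implicit Types z w : R[i].

Lemma ReD z w : Re (z + w) = Re z + Re w. Proof. by case: z; case: w. Qed.
Lemma ImD z w : Im (z + w) = Im z + Im w. Proof. by case: z; case: w. Qed.
Lemma ReN z : Re (- z) = - Re z. Proof. by case: z. Qed.
Lemma ImN z : Im (- z) = - Im z. Proof. by case: z. Qed.
Lemma ReM z w : Re (z * w) = Re z * Re w - Im z * Im w.
Proof. by case: z; case: w. Qed.
Lemma ImM z w : Im (z * w) = Re z * Im w + Im z * Re w.
Proof. by case: z => a b; case: w => c d /=; ring. Qed.
Lemma ReJ z : Re (z^*%C) = Re z. Proof. by case: z. Qed.
Lemma ImJ z : Im (z^*%C) = - Im z. Proof. by case: z. Qed.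

Lemma complex_eq z w : Re z = Re w -> Im z = Im w -> z = w.
Proof. by case: z => a b; case: w => c d /= -> ->. Qed.

Lemma mulcJ z : z * z^*%C = (Re z ^+ 2 + Im z ^+ 2)%:C.
Proof. by case: z => a b; apply: complex_eq => /=; ring. Qed.

Lemma mulcJ_conj z : z^*%C * z^*%C^*%C = z * z^*%C.
Proof. by case: z => a b; apply: complex_eq => /=; ring. Qed.

Lemma mulcJ_opp z : (- z) * (- z)^*%C = z * z^*%C.
Proof. by case: z => a b; apply: complex_eq => /=; ring. Qed.

Lemma quadrant_im_mul (b1 b2 : bool) (m1 m2 Qx Qy : R) (X Y : R[i]) :
    0 <= m1 -> 0 <= m2 -> 0 <= Qx -> 0 <= Qy ->
    m1 * Qx <= (-1) ^+ b1 * Re X -> m2 * Qx <= (-1) ^+ b2 * Im X ->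
    m1 * Qy <= (-1) ^+ b1 * Re Y -> m2 * Qy <= (-1) ^+ b2 * Im Y ->
  2 * (m1 * m2 * (Qx * Qy)) <= (-1) ^+ b1 * (-1) ^+ b2 * Im (X * Y).
Proof.
move=> m1_ge0 m2_ge0 Qx_ge0 Qy_ge0 ReX ImX ReY ImY.
have -> : (-1) ^+ b1 * (-1) ^+ b2 * Im (X * Y) =
    (-1) ^+ b1 * Re X * ((-1) ^+ b2 * Im Y) + (-1) ^+ b2 * Im X * ((-1) ^+ b1 * Re Y).
  by rewrite ImM; ring.
have -> : 2 * (m1 * m2 * (Qx * Qy)) = m1 * Qx * (m2 * Qy) + m2 * Qx * (m1 * Qy) by ring.
by apply: lerD; apply: ler_pM => //; apply: mulr_ge0.
Qed.

Lemma im_mul_rotate_le (mu X Y : R[i]) (eta Qx Qy : R) :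
    mu * mu^*%C = 1 ->
    `|Re (mu * X)| <= Qx -> `|Im (mu * X)| <= eta * Qx ->
    `|Re (mu^*%C * Y)| <= Qy -> `|Im (mu^*%C * Y)| <= eta * Qy ->
  `|Im (X * Y)| <= 2 * eta * (Qx * Qy).
Proof.
move=> mu_unit ReX ImX ReY ImY.
have -> : X * Y = (mu * X) * (mu^*%C * Y) by rewrite mulrACA mu_unit mul1r.
rewrite ImM; apply: le_trans (ler_normD _ _) _; rewrite !normrM.
have -> : 2 * eta * (Qx * Qy) = Qx * (eta * Qy) + eta * Qx * Qy by ring.
by apply: lerD; apply: ler_pM => //; apply: le_trans (normr_ge0 _) _; eassumption.
Qed.

End ComplexParts.

Ltac simpReIm := rewrite ?(ReD, ImD, ReN, ImN, ReM, ImM, ReJ, ImJ) /=.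

Section LinearMaps.
Variables (R : realType) (H : lmodType R[i]) (T : H -> H).
Hypothesis linT : linear T.

Lemma lin0 : T 0 = 0.
Proof.
have := linT 1 0 0; rewrite !scale1r addr0 => T0D.
by apply: (addrI (T 0)); rewrite -T0D addr0.
Qed.

Lemma linZ a x : T (a *: x) = a *: T x.
Proof. by rewrite -[a *: x]addr0 linT lin0 addr0. Qed.

Lemma linB x y : T (x - y) = T x - T y.
Proof. by rewrite addrC -scaleN1r linT scaleN1r addrC. Qed.

End LinearMaps.

Section InnerProduct.
Variables (R : realType) (H : lmodType R[i]) (inner : H -> H -> R[i]).
Hypothesis ip : is_inner_product inner.
Implicit Types (x y z : H) (a : R[i]).

Lemma inner_conj x y : inner y x = (inner x y)^*%C.
Proof. by case: ip => _ + _ _; apply. Qed.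

Lemma innerDl x y z : inner (x + y) z = inner x z + inner y z.
Proof. by case: ip => /(_ 1 x y z); rewrite scale1r mul1r. Qed.

Lemma inner0l z : inner 0 z = 0.
Proof. by apply: (addrI (inner 0 z)); rewrite addr0 -innerDl addr0. Qed.

Lemma innerZl a x z : inner (a *: x) z = a * inner x z.
Proof. by case: ip => /(_ a x 0 z) + _ _ _; rewrite addr0 inner0l addr0. Qed.

Lemma innerBl x y z : inner (x - y) z = inner x z - inner y z.
Proof. by rewrite innerDl -scaleN1r innerZl mulN1r. Qed.

Lemma innerDr x y z : inner z (x + y) = inner z x + inner z y.
Proof. by rewrite inner_conj innerDl rmorphD [inner z x]inner_conj [inner z y]inner_conj. Qed.

Lemma innerZr a x z : inner z (a *: x) = a^*%C * inner z x.
Proof. by rewrite inner_conj innerZl rmorphM [inner z x]inner_conj. Qed.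

Lemma innerBr x y z : inner z (x - y) = inner z x - inner z y.
Proof. by rewrite inner_conj innerBl rmorphB [inner z x]inner_conj [inner z y]inner_conj. Qed.

Definition sqnorm x := Re (inner x x).

Lemma inner_self x : inner x x = (sqnorm x)%:C.
Proof.
case: ip => _ _ /(_ x) /ger0_Im + _; rewrite /sqnorm.
by case: (inner x x) => a b /= ->.
Qed.

Lemma sqnorm_ge0 x : 0 <= sqnorm x.
Proof. by case: ip => _ _ /(_ x) + _; rewrite inner_self ler0c. Qed.

Lemma sqnorm0 : sqnorm 0 = 0.
Proof. by rewrite /sqnorm inner0l. Qed.

Lemma sqnorm_gt0 x : x != 0 -> 0 < sqnorm x.
Proof.
move=> x_neq0; rewrite lt_def sqnorm_ge0 andbT; apply: contraNneq x_neq0 => qx0.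
by apply/eqP; case: ip => _ _ _; apply; rewrite inner_self qx0.
Qed.

Lemma sqnormZ a x : sqnorm (a *: x) = (Re a ^+ 2 + Im a ^+ 2) * sqnorm x.
Proof.
rewrite /sqnorm innerZl innerZr inner_self.
by case: a => a b /=; ring.
Qed.

Lemma sqnorm_unitZ a x : a * a^*%C = 1 -> sqnorm (a *: x) = sqnorm x.
Proof.
move=> /(congr1 (fun z : R[i] => Re z)); rewrite mulcJ sqnormZ /= => ->.
exact: mul1r.
Qed.

Lemma sqnormD x y : sqnorm (x + y) = sqnorm x + sqnorm y + 2 * Re (inner x y).
Proof. by rewrite /sqnorm innerDl !innerDr [inner y x]inner_conj; simpReIm; ring. Qed.

Lemma ler_re_inner x y : 2 * `|Re (inner x y)| <= sqnorm x + sqnorm y.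
Proof.
have := sqnorm_ge0 (x + y); have := sqnorm_ge0 (x + (-1) *: y).
rewrite !sqnormD sqnorm_unitZ ?rmorphN1 ?mulrNN ?mulr1 // innerZr rmorphN1 mulN1r ReN.
by case: (lerP 0 (Re (inner x y))) => [/ger0_norm|/ltr0_norm] ->; lra.
Qed.

Lemma ler_im_inner r x y :
  0 < r -> 2 * r * `|Im (inner x y)| <= r ^+ 2 * sqnorm x + sqnorm y.
Proof.
move=> r_gt0; have := ler_re_inner (r *i *: x) y.
rewrite innerZl sqnormZ; simpReIm.
by rewrite mul0r sub0r normrN normrM (gtr0_norm r_gt0) expr0n add0r mulrA.
Qed.

Definition approx_singular (B : H -> H) :=
  forall e : R, 0 < e -> exists x, sqnorm (B x) < e * sqnorm x.

Lemma approx_singular_transfer (V B C : H -> H) :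
  (forall x, sqnorm (V x) = sqnorm x) ->
  (forall x, sqnorm (C (V x)) = sqnorm (B x)) ->
  approx_singular B -> approx_singular C.
Proof.
move=> isoV CVB asB e /asB[x Bx_small]; exists (V x).
by rewrite CVB isoV.
Qed.

Lemma not_approx_singular B : ~ approx_singular B ->
  exists2 e, 0 < e & forall x, e * sqnorm x <= sqnorm (B x).
Proof.
move=> nasB; apply: contrapT => not_bdd; apply: nasB => e e_gt0.
apply: contrapT => /forallNP big; apply: not_bdd; exists e => // x.
by rewrite leNgt; apply/negP; apply: big.
Qed.

Lemma approx_singular_comp (C D : H -> H) :
  approx_singular (fun x => C (D x)) -> approx_singular C \/ approx_singular D.
Proof.
move=> asCD; case: (pselect (approx_singular C)) => [|/not_approx_singular[eC eC_gt0 Cbig]].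
  by left.
case: (pselect (approx_singular D)) => [|/not_approx_singular[eD eD_gt0 Dbig]].
  by right.
have [x CDx_small] := asCD _ (mulr_gt0 eC_gt0 eD_gt0).
have := le_trans (ler_wpM2l (ltW eC_gt0) (Dbig x)) (Cbig (D x)).
by rewrite mulrA => /(lt_le_trans CDx_small); rewrite ltxx.
Qed.

Lemma approx_singular_spectrum (U : H -> H) (mu : R[i]) :
  approx_singular (fun x => U x - mu *: x) -> spectrum inner U mu.
Proof.
move=> asB [V [[_ [M boundV]] VK _]].
set B := fun x => U x - mu *: x in asB.
have M2_gt0 : 0 < M ^+ 2 + 1 by rewrite ltr_pwDr ?sqr_ge0.
have e_gt0 : 0 < (M ^+ 2 + 1)^-1 by rewrite invr_gt0.
have [x Bx_small] := asB _ e_gt0.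
have x_le : sqnorm x <= M ^+ 2 * sqnorm (B x).
  have := boundV (B x); rewrite VK /hnorm -/(sqnorm _) -/(sqnorm _) => le_sqrt.
  have MBx_ge0 := le_trans (sqrtr_ge0 _) le_sqrt.
  rewrite -(sqr_sqrtr (sqnorm_ge0 x)) -(sqr_sqrtr (sqnorm_ge0 (B x))) -exprMn.
  by rewrite ler_pXn2r // ?nnegrE ?sqrtr_ge0.
move: Bx_small; rewrite ltr_pdivlMl //.
have := sqnorm_ge0 (B x); nra.
Qed.

Definition unitary_pair (W W' : H -> H) :=
  [/\ linear W, linear W', forall x y, inner (W x) y = inner x (W' y),
      cancel W W' & cancel W' W].

Lemma unitary_pair_of_unitary U : unitary inner U -> exists U', unitary_pair U U'.
Proof. by case=> [[linU _] [U' [[linU' _] adjU UK U'K]]]; exists U'. Qed.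

Lemma symmetry_unitary_pair S : symmetry inner S -> unitary_pair S S.
Proof.
case=> [[[linS _] [S' [[linS' _] adjS SK S'K]]] adjSS].
suff eqS' : forall y, S' y = S y.
  by split=> // x; rewrite -{1}eqS' SK.
move=> y; apply/eqP; rewrite -subr_eq0; apply/eqP; case: ip => _ _ _; apply.
by rewrite innerBr -adjS adjSS subrr.
Qed.

Lemma unitary_pair_sym W W' : unitary_pair W W' -> unitary_pair W' W.
Proof.
case=> linW linW' adjW WK W'K; split=> // x y.
by rewrite inner_conj -adjW -inner_conj.
Qed.

Lemma unitary_pair_isometry W W' x : unitary_pair W W' -> sqnorm (W x) = sqnorm x.
Proof. by case=> _ _ adjW WK _; rewrite /sqnorm adjW WK. Qed.

Lemma unitary_pair_comp W W' V V' : unitary_pair W W' -> unitary_pair V V' ->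
  unitary_pair (fun x => W (V x)) (fun x => V' (W' x)).
Proof.
case=> linW linW' adjW WK W'K [linV linV' adjV VK V'K].
split=> [a x y|a x y|x y|x|x]; first by rewrite linV linW.
- by rewrite linW' linV'.
- by rewrite adjW adjV.
- by rewrite WK VK.
- by rewrite V'K W'K.
Qed.

Lemma unitary_pair_rotate c W W' : c * c^*%C = 1 -> unitary_pair W W' ->
  unitary_pair (fun x => c^*%C *: W x) (fun x => c *: W' x).
Proof.
move=> cJc [linW linW' adjW WK W'K].
split=> [a x y|a x y|x y|x|x].
- by rewrite linW scalerDr !scalerA mulrC.
- by rewrite linW' scalerDr !scalerA mulrC.
- by rewrite innerZl innerZr adjW.
- by rewrite (linZ linW') WK scalerA cJc scale1r.
- by rewrite (linZ linW) W'K scalerA mulrC cJc scale1r.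
Qed.

Lemma unitary_pair_factor W W' mu1 mu2 x : unitary_pair W W' -> mu1 * mu2 = 1 ->
  W' (W (W x - mu2 *: x) - mu1 *: (W x - mu2 *: x)) = W x + W' x - (mu1 + mu2) *: x.
Proof.
case=> _ linW' _ WK _ mu12.
rewrite (linB linW') WK (linZ linW') (linB linW') WK (linZ linW').
rewrite scalerBr scalerA mu12 scale1r scalerDl.
by rewrite opprB opprD addrACA [- (mu2 *: x) - _]addrC.
Qed.

Lemma linear_shift (A : H -> H) (c : R[i]) : linear A -> linear (fun x => A x - c *: x).
Proof.
move=> linA a x y; rewrite linA scalerDr scalerBr !scalerA [c * a]mulrC.
by rewrite opprD addrACA.
Qed.

Lemma selfadjoint_sqnorm_le (B : H -> H) (L : R) :
    linear B -> (forall x y, inner (B x) y = inner x (B y)) ->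
    (forall x, 0 <= Re (inner (B x) x)) -> 0 < L ->
    (forall x, Re (inner (B x) x) <= L * sqnorm x) ->
  forall x, sqnorm (B x) <= L * Re (inner (B x) x).
Proof.
move=> linB' adjB B_ge0 L_gt0 B_le x.
have Bz_expand : Re (inner (B (L%:C *: x - B x)) (L%:C *: x - B x)) =
    L ^+ 2 * Re (inner (B x) x) - 2 * L * sqnorm (B x) + Re (inner (B (B x)) (B x)).
  rewrite (linB linB') (linZ linB') !innerBl !innerBr !innerZl !innerZr.
  by rewrite [inner (B (B x)) x]adjB /sqnorm; simpReIm; ring.
have := B_ge0 (L%:C *: x - B x); have := B_le (B x); rewrite Bz_expand => BBx_le BBx_ge0.
have : L * sqnorm (B x) <= L * (L * Re (inner (B x) x)) by move: BBx_le BBx_ge0; lra.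
by rewrite ler_pM2l.
Qed.

Lemma inf_ratio_sqnorm (f : H -> R) (K : R) :
    (forall x, `|f x| <= K * sqnorm x) -> (exists x : H, x != 0) ->
  exists m, [/\ -K <= m <= K, forall x, m * sqnorm x <= f x
    & forall e, 0 < e -> exists x, f x < (m + e) * sqnorm x].
Proof.
move=> f_bdd [x0 x0_neq0].
pose E := [set r | exists2 x, x != 0 & r = f x / sqnorm x].
have E_neq0 : E !=set0 by exists (f x0 / sqnorm x0), x0.
have K_lb : lbound E (- K).
  move=> _ [x x_neq0 ->]; rewrite ler_pdivlMr ?sqnorm_gt0 // mulNr.
  by have := f_bdd x; rewrite ler_norml => /andP[].
have m_lb x : inf E * sqnorm x <= f x.
  have [->|x_neq0] := eqVneq x 0.
    by have := f_bdd 0; rewrite sqnorm0 !mulr0 normr_le0 => /eqP->.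
  by rewrite -ler_pdivlMr ?sqnorm_gt0 //; apply: ge_inf; [exists (- K) | exists x].
exists (inf E); split=> //.
- rewrite lb_le_inf //=.
  have := le_trans (m_lb x0) (le_trans (ler_norm _) (f_bdd x0)).
  by rewrite ler_pM2r ?sqnorm_gt0.
- move=> e e_gt0; have : inf E < inf E + e by rewrite ltrDl.
  move=> /(inf_lt E_neq0)[_ [x x_neq0 ->]].
  by rewrite ltr_pdivrMr ?sqnorm_gt0 //; exists x.
Qed.

Lemma selfadjoint_approx_singular (A : H -> H) (m K : R) :
    linear A -> (forall x y, inner (A x) y = inner x (A y)) ->
    (forall x, m * sqnorm x <= Re (inner (A x) x)) ->
    (forall x, Re (inner (A x) x) <= K * sqnorm x) ->
    (forall e, 0 < e -> exists x, Re (inner (A x) x) < (m + e) * sqnorm x) ->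
  approx_singular (fun x => A x - m%:C *: x).
Proof.
move=> linA adjA m_lb K_ub m_inf.
set B := fun x => A x - m%:C *: x.
have reB x : Re (inner (B x) x) = Re (inner (A x) x) - m * sqnorm x.
  by rewrite /B innerBl innerZl inner_self; simpReIm; ring.
have adjB x y : inner (B x) y = inner x (B y).
  by rewrite /B innerBl innerBr innerZl innerZr adjA conjc_real.
have B_ge0 x : 0 <= Re (inner (B x) x) by rewrite reB subr_ge0.
pose L := `|K - m| + 1.
have L_gt0 : 0 < L by rewrite /L; have := normr_ge0 (K - m); lra.
have B_le x : Re (inner (B x) x) <= L * sqnorm x.
  have := ler_wpM2r (sqnorm_ge0 x) (ler_norm (K - m)).
  by rewrite reB /L; have := K_ub x; have := sqnorm_ge0 x; lra.
have sqB_le := selfadjoint_sqnorm_le (linear_shift _ linA) adjB B_ge0 L_gt0 B_le.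
move=> e e_gt0; have [x small] := m_inf (e / L) (divr_gt0 e_gt0 L_gt0).
exists x; apply: le_lt_trans (sqB_le x) _.
have -> : e * sqnorm x = L * (e / L * sqnorm x).
  by rewrite mulrA mulrCA mulfV ?gt_eqF ?mulr1.
by rewrite ltr_pM2l // reB; move: small; rewrite mulrDl; lra.
Qed.

Lemma unitary_pair_approx_eigenvalue W W' :
    unitary_pair W W' -> (exists x : H, x != 0) ->
  exists mu, [/\ mu * mu^*%C = 1, forall x, Re mu * sqnorm x <= Re (inner (W x) x)
    & approx_singular (fun x => W x - mu *: x)].
Proof.
move=> uW H_neq0; have [linW linW' adjW _ _] := uW.
have [_ _ adjW' _ _] := unitary_pair_sym uW.
pose A x := W x + W' x.
have linA : linear A by move=> a x y; rewrite /A linW linW' scalerDr addrACA.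
have adjA x y : inner (A x) y = inner x (A y).
  by rewrite /A innerDl innerDr adjW adjW' addrC.
have reA x : Re (inner (A x) x) = 2 * Re (inner (W x) x).
  by rewrite /A innerDl adjW' [inner x (W x)]inner_conj; simpReIm; ring.
have A_bdd x : `|Re (inner (A x) x)| <= 2 * sqnorm x.
  rewrite reA normrM ger0_norm //; have := ler_re_inner (W x) x.
  by rewrite (unitary_pair_isometry _ uW); lra.
have [M [/andP[M_ge M_le] M_lb M_inf]] := inf_ratio_sqnorm A_bdd H_neq0.
have asA := selfadjoint_approx_singular linA adjA M_lb
  (fun x => le_trans (ler_norm _) (A_bdd x)) M_inf.
pose m := M / 2; pose t := Num.sqrt (1 - m ^+ 2).
have t2 : t ^+ 2 = 1 - m ^+ 2.
  by rewrite sqr_sqrtr // subr_ge0 /m; nra.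
have unit_m s : s ^+ 2 = t ^+ 2 -> (m +i* s) * (m +i* s)^*%C = 1.
  by move=> s2; apply: complex_eq; simpReIm; nra.
(* [W + W' - 2 m] factors as [W' (W - (m + i t)) (W - (m - i t))]. *)
have asWW : approx_singular
    (fun x => W (W x - (m -i* t) *: x) - (m +i* t) *: (W x - (m -i* t) *: x)).
  apply: (approx_singular_transfer (V := id)) asA => // x.
  rewrite -(unitary_pair_isometry _ (unitary_pair_sym uW)) unitary_pair_factor //.
    by congr (sqnorm (_ - _ *: x)); apply: complex_eq; simpReIm; rewrite /m; lra.
  by apply: complex_eq; simpReIm; nra.
have good s : s ^+ 2 = t ^+ 2 -> approx_singular (fun x => W x - (m +i* s) *: x) ->
  exists mu, [/\ mu * mu^*%C = 1, forall x, Re mu * sqnorm x <= Re (inner (W x) x)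
    & approx_singular (fun x => W x - mu *: x)].
  move=> s2 as_s; exists (m +i* s); split=> //; first exact: unit_m.
  by move=> x /=; have := M_lb x; rewrite reA /m; lra.
have [|] := approx_singular_comp (C := fun y => W y - (m +i* t) *: y) asWW.
  exact: good.
by apply: good; rewrite sqrrN.
Qed.

Lemma unitary_numerical_range_halfplane U U' (c : R[i]) :
    unitary_pair U U' -> c * c^*%C = 1 -> (exists x : H, x != 0) ->
    (forall z : R[i], spectrum inner U z -> 0 < Re (c^*%C * z)) ->
  exists2 m, 0 < m & forall x, m * sqnorm x <= Re (c^*%C * inner (U x) x).
Proof.
move=> uU cJc H_neq0 sp_half.
have [mu [_ mu_lb as_mu]] :=
  unitary_pair_approx_eigenvalue (unitary_pair_rotate cJc uU) H_neq0.
exists (Re mu); last by move=> x; rewrite -innerZl; apply: mu_lb.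
have := sp_half (c * mu); rewrite mulrA [c^*%C * c]mulrC cJc mul1r; apply.
apply: approx_singular_spectrum; apply: (approx_singular_transfer (V := id)) as_mu => // x.
by rewrite -[sqnorm (c^*%C *: _ - _)](sqnorm_unitZ _ cJc) scalerBr !scalerA cJc scale1r.
Qed.

Lemma selfadjoint_inner_real (A : H -> H) x :
  (forall x y, inner (A x) y = inner x (A y)) -> Im (inner (A x) x) = 0.
Proof.
move=> adjA; have := congr1 (fun z : R[i] => Im z) (inner_conj (A x) x).
by rewrite -adjA ImJ; lra.
Qed.

Lemma approx_singular_near_real (U P : H -> H) (nu : R[i]) eta :
    (forall z, Im (inner (U z) (P z)) = 0) -> (forall z, sqnorm (U z) = sqnorm z) ->
    approx_singular (fun x => P x - nu *: x) -> 0 < eta ->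
  exists2 x, x != 0 & `|Im (nu^*%C * inner (U x) x)| <= eta * sqnorm x.
Proof.
move=> UP_real isoU asP eta_gt0.
have [x small] := asP (eta ^+ 2) (exprn_gt0 _ eta_gt0).
have x_neq0 : x != 0.
  by apply: contraTneq small => ->; rewrite sqnorm0 mulr0 -leNgt sqnorm_ge0.
exists x => //.
have -> : Im (nu^*%C * inner (U x) x) = - Im (inner (U x) (P x - nu *: x)).
  by rewrite innerBr innerZr ImD ImN UP_real opprB subr0.
have := ler_im_inner (U x) (P x - nu *: x) eta_gt0; rewrite isoU.
have := sqnorm_ge0 x; move: small; rewrite normrN.
set a := `|_|; set Q := sqnorm x; set Pe := sqnorm _ => small Q_ge0 a_le.
have : 2 * eta * a <= 2 * eta * (eta * Q) by lra.
by rewrite ler_pM2l ?mulr_gt0.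
Qed.

Lemma approx_singular_inverse W W' mu : unitary_pair W W' -> mu * mu^*%C = 1 ->
  approx_singular (fun x => W x - mu *: x) ->
  approx_singular (fun x => W' x - mu^*%C *: x).
Proof.
move=> uW mu_unit; apply: (approx_singular_transfer (V := id)) => // x /=.
have [_ linW' _ WK _] := uW.
have -> : W' x - mu^*%C *: x = (- mu^*%C) *: W' (W x - mu *: x).
  rewrite (linB linW') WK (linZ linW') scalerBr scalerA mulNr [mu^*%C * mu]mulrC mu_unit.
  by rewrite scaleN1r opprK scaleNr addrC.
rewrite sqnorm_unitZ ?(unitary_pair_isometry _ (unitary_pair_sym uW)) //.
by rewrite mulcJ_opp mulcJ_conj.
Qed.

Lemma approx_singular_conj (V W P : H -> H) nu :
    linear V -> (forall x, sqnorm (V x) = sqnorm x) -> (forall x, P (V x) = V (W x)) ->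
  approx_singular (fun x => W x - nu *: x) -> approx_singular (fun x => P x - nu *: x).
Proof.
move=> linV isoV PV; apply: (approx_singular_transfer isoV) => x.
by rewrite PV -(linZ linV) -(linB linV) isoV.
Qed.

Lemma three_symmetries_not_quadrant (S1 S2 S3 U : H -> H) (b1 b2 : bool) (m1 m2 : R) :
    unitary_pair S1 S1 -> unitary_pair S2 S2 -> unitary_pair S3 S3 ->
    (forall x, U x = S1 (S2 (S3 x))) -> (exists x : H, x != 0) -> 0 < m1 -> 0 < m2 ->
    (forall x, m1 * sqnorm x <= (-1) ^+ b1 * Re (inner (U x) x)) ->
    (forall x, m2 * sqnorm x <= (-1) ^+ b2 * Im (inner (U x) x)) -> False.
Proof.
move=> u1 u2 u3 U_eq H_neq0 m1_gt0 m2_gt0 ReU ImU.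
have [lin1 _ adj1 K1 _] := u1; have [_ _ adj2 _ _] := u2.
have uP := unitary_pair_comp u1 u3.
have [mu [mu_unit _ as_mu]] := unitary_pair_approx_eigenvalue uP H_neq0.
have as_muJ : approx_singular (fun x => S1 (S3 x) - mu^*%C *: x).
  apply: (approx_singular_conj (W := fun x => S3 (S1 x)) lin1) => // [x|].
    exact: unitary_pair_isometry u1.
  exact: approx_singular_inverse uP mu_unit as_mu.
have isoU x : sqnorm (U x) = sqnorm x.
  by rewrite U_eq !(unitary_pair_isometry _ u1, unitary_pair_isometry _ u2,
                     unitary_pair_isometry _ u3).
have UP_real z : Im (inner (U z) (S1 (S3 z))) = 0.
  by rewrite U_eq adj1 K1 (selfadjoint_inner_real _ adj2).
pose eta := m1 * m2 / 2.
have eta_gt0 : 0 < eta by rewrite divr_gt0 ?mulr_gt0.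
have [x x_neq0] := approx_singular_near_real UP_real isoU as_muJ eta_gt0.
rewrite conjcK => ImX.
have [y y_neq0 ImY] := approx_singular_near_real UP_real isoU as_mu eta_gt0.
have ReU_le a z : a * a^*%C = 1 -> `|Re (a * inner (U z) z)| <= sqnorm z.
  move=> a_unit; rewrite -innerZl; have := ler_re_inner (a *: U z) z.
  by rewrite sqnorm_unitZ // isoU; lra.
have lower := quadrant_im_mul (ltW m1_gt0) (ltW m2_gt0) (sqnorm_ge0 x) (sqnorm_ge0 y)
  (ReU x) (ImU x) (ReU y) (ImU y).
have upper := im_mul_rotate_le mu_unit (ReU_le _ _ mu_unit) ImX
  (ReU_le _ _ (etrans (mulcJ_conj mu) mu_unit)) ImY.
have signed_upper : (-1) ^+ b1 * (-1) ^+ b2 * Im (inner (U x) x * inner (U y) y)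
    <= 2 * eta * (sqnorm x * sqnorm y).
  by apply: le_trans (ler_norm _) _; rewrite !normrM !normr_sign !mul1r.
have := le_trans lower signed_upper.
have : 0 < m1 * m2 * (sqnorm x * sqnorm y) by rewrite !mulr_gt0 ?sqnorm_gt0.
rewrite /eta; lra.
Qed.

End InnerProduct.

Lemma cos_sin_gt0 (R : realType) (a : R) : 0 < a < pi / 2 -> 0 < cos a /\ 0 < sin a.
Proof.
move=> /andP[a_gt0 a_lt]; split; last by apply: sin_gt0_pihalf; rewrite a_gt0.
by apply: cos_gt0_pihalf; rewrite a_lt andbT; have := pi_gt0 R; lra.
Qed.

Lemma arcC_quadrant (R : realType) (k : nat) : (1 <= k <= 4)%N ->
  exists b1 b2 : bool, forall z : R[i], arcC k z ->
    0 < (-1) ^+ b1 * Re z /\ 0 < (-1) ^+ b2 * Im z.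
Proof.
move=> k_range; exists ((k == 2) || (k == 3))%N, (2 < k)%N => _ [al [al_gt [al_lt ->]]] /=.
have pi_gt0 := pi_gt0 R.
pose a := 2%:R * pi * al - (k%:R - 1) * (pi / 2).
have a_range : 0 < a < pi / 2.
  have pi2_gt0 : 0 < 2%:R * pi :> R by rewrite mulr_gt0 ?ltr0n.
  have lo : 2%:R * pi * ((k%:R - 1) / 4%:R) < 2%:R * pi * al by rewrite ltr_pM2l.
  have hi : 2%:R * pi * al < 2%:R * pi * (k%:R / 4%:R) by rewrite ltr_pM2l.
  by rewrite /a; apply/andP; split; lra.
have [cos_gt0 sin_gt0] := cos_sin_gt0 a_range.
rewrite -[2%:R * pi * al](subrK ((k%:R - 1) * (pi / 2))) -/a.
clearbody a; case: k k_range al_gt al_lt => [|[|[|[|[|k]]]]] //= _ _ _.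
- by rewrite subrr mul0r addr0 expr0 !mul1r.
- have -> : (2 - 1) * (pi / 2) = pi / 2 :> R by lra.
  by rewrite cosDpihalf sinDpihalf expr1 expr0 mulN1r mul1r opprK.
- have -> : (3 - 1) * (pi / 2) = pi :> R by lra.
  by rewrite cosDpi sinDpi expr1 !mulN1r !opprK.
- have -> : (4 - 1) * (pi / 2) = pi / 2 + pi :> R by lra.
  by rewrite addrA cosDpi sinDpi cosDpihalf sinDpihalf expr1 expr0 mulN1r mul1r !opprK.
Qed.

Theorem proposition4p5 (R : realType) (H : lmodType R[i])
    (inner : H -> H -> R[i]) (U : H -> H) (k : nat) :
  is_hilbert inner ->
  (exists x : H, x != 0) ->
  (1 <= k <= 4)%N ->
  unitary inner U ->
  spectrum inner U `<=` @arcC R k ->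
  ~ exists S1 S2 S3 : H -> H,
      [/\ symmetry inner S1, symmetry inner S2, symmetry inner S3
        & forall x : H, U x = S1 (S2 (S3 x))].
Proof.
move=> [ip _] H_neq0 k_range uU sp_arc [S1 [S2 [S3 [sS1 sS2 sS3 U_eq]]]].
have [b1 [b2 quadrant]] := arcC_quadrant R k_range.
have [U' uU'] := unitary_pair_of_unitary uU.
have [m1 m1_gt0 ReU] :
    exists2 m, 0 < m & forall x, m * sqnorm inner x <= (-1) ^+ b1 * Re (inner (U x) x).
  have [||m m_gt0 m_lb] :=
    unitary_numerical_range_halfplane ip (c := ((-1) ^+ b1)%:C) uU' _ H_neq0.
  - by rewrite mulcJ /= expr0n addr0 sqrr_sign.
  - by move=> z /sp_arc /quadrant[Re_gt0 _]; simpReIm; rewrite oppr0 mul0r subr0.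
  by exists m => // x; have := m_lb x; simpReIm; rewrite oppr0 mul0r subr0.
have [m2 m2_gt0 ImU] :
    exists2 m, 0 < m & forall x, m * sqnorm inner x <= (-1) ^+ b2 * Im (inner (U x) x).
  have [||m m_gt0 m_lb] :=
    unitary_numerical_range_halfplane ip (c := ((-1) ^+ b2) *i) uU' _ H_neq0.
  - by rewrite mulcJ /= expr0n add0r sqrr_sign.
  - by move=> z /sp_arc /quadrant[_ Im_gt0]; simpReIm; rewrite mul0r sub0r mulNr opprK.
  by exists m => // x; have := m_lb x; simpReIm; rewrite mul0r sub0r mulNr opprK.
exact: (three_symmetries_not_quadrant ip (symmetry_unitary_pair ip sS1)
  (symmetry_unitary_pair ip sS2) (symmetry_unitary_pair ip sS3) U_eq H_neq0 m1_gt0 m2_gt0).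
Qed.
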